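(* Let $\ell$ satisfy Assumption 1 and let $W(t)$, $t\ge0$, be a gradient flow trajectory whose initialization satisfies Assumption 2. Then for every $R>0$ there is a constant $\epsilon(R)>0$ such that for every $t\ge 1$ with $W(t)\in B(R)$ we have $\left\|\frac{\partial\mathcal{R}}{\partial W_1}(W(t))\right\|_F\ge\epsilon(R)$. Consequently, for every $R>0$ the set $\{t\ge 0: W(t)\in B(R)\}$ has finite Lebesgue measure, and $t\mapsto\max_{1\le k\le L}\|W_k(t)\|_F$ is unbounded.
   Context: Setting: data $(x_i,y_i)_{i=1}^n$ with $x_i\in\mathbb{R}^d$, $\|x_i\|\le 1$, $y_i\in\{-1,+1\}$; put $z_i:=y_ix_i$. The data are linearly separable, i.e. some unit vector $u$ has $\langle u,z_i\rangle>0$ for all $i$. Let $\gamma:=\max_{\|u\|=1}\min_{i}\langle u,z_i\rangle>0$ and let $\bar u$ be the unique unit vector attaining it. A depth-$L$ linear network is $W=(W_L,\dots,W_1)$ with $W_k\in\mathbb{R}^{d_k\times d_{k-1}}$, $d_0=d$, $d_L=1$, and $w_{\mathrm{prod}}:=(W_L\cdots W_1)^\top\in\mathbb{R}^d$. The risk is $\mathcal{R}(W)=\frac1n\sum_{i=1}^n\ell(\langle w_{\mathrm{prod}},z_i\rangle)$. For $R>0$, $B(R):=\{W:\max_{1\le k\le L}\|W_k\|_F\le R\}$. Assumption 1: $\ell:\mathbb{R}\to\mathbb{R}$ is continuously differentiable, $\ell'(x)<0$ for all $x$, $\lim_{x\to-\infty}\ell(x)=\infty$ and $\lim_{x\to\infty}\ell(x)=0$.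 Gradient flow: a $C^1$ curve $W(t)$, $t\in[0,\infty)$, with $\frac{d}{dt}W(t)=-\nabla\mathcal{R}(W(t))$. Assumption 2: $\nabla\mathcal{R}(W(0))\neq 0$ and $\mathcal{R}(W(0))\le \ell(0)$. *)

From Stdlib Require Import Reals Lra Lia.
Open Scope R_scope.

Fixpoint fsum (n : nat) (f : nat -> R) : R :=
  match n with
  | O => 0
  | S m => fsum m f + f m
  end.

(* Network parameters: W k a b is entry (a,b) of layer matrix W_k (k = 1..L),
   a < dims k, b < dims (k-1).  Entries outside these ranges are irrelevant. *)
Definition params := nat -> nat -> nat -> R.

Definition valid_index (L : nat) (dims : nat -> nat) (k a b : nat) : Prop :=
  (1 <= k <= L)%nat /\ (a < dims k)%nat /\ (b < dims (k - 1)%nat)%nat.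

Fixpoint partial_prod (dims : nat -> nat) (W : params) (k : nat) : nat -> nat -> R :=
  match k with
  | O => fun a b => if Nat.eqb a b then 1 else 0
  | S k' => fun a b =>
      fsum (dims k') (fun c => W (S k') a c * partial_prod dims W k' c b)
  end.

(* w_prod = (W_L ... W_1)^T in R^d ; since d_L = 1 it is row 0 of the product *)
Definition w_prod (L : nat) (dims : nat -> nat) (W : params) (j : nat) : R :=
  partial_prod dims W L 0%nat j.

Definition zdat (x : nat -> nat -> R) (y : nat -> R) (i j : nat) : R := y i * x i j.

Definition risk (l : R -> R) (n d L : nat) (dims : nat -> nat)
  (x : nat -> nat -> R) (y : nat -> R) (W : params) : R :=
  / INR n * fsum n (fun i => l (fsum d (fun j => w_prod L dims W j * zdat x y i j))).

Definition perturb (W : params) (k a b : nat) (s : R) : params :=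
  fun k' a' b' =>
    if (Nat.eqb k' k && Nat.eqb a' a && Nat.eqb b' b)%bool
    then W k' a' b' + s else W k' a' b'.

Definition is_gradient (L : nat) (dims : nat -> nat) (f : params -> R)
  (W G : params) : Prop :=
  forall k a b, valid_index L dims k a b ->
    derivable_pt_lim (fun s => f (perturb W k a b s)) 0 (G k a b).

(* derivative of g at t relative to the domain [0, +oo) (one-sided at t = 0) *)
Definition deriv_nonneg (g : R -> R) (t l : R) : Prop :=
  forall eps, 0 < eps -> exists delta, 0 < delta /\
    forall h, h <> 0 -> Rabs h < delta -> 0 <= t + h ->
      Rabs ((g (t + h) - g t) / h - l) < eps.

Definition cont_nonneg (g : R -> R) (t : R) : Prop :=
  forall eps, 0 < eps -> exists delta, 0 < delta /\
    forall s, 0 <= s -> Rabs (s - t) < delta -> Rabs (g s - g t) < eps.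

Definition frob (dims : nat -> nat) (W : params) (k : nat) : R :=
  sqrt (fsum (dims k) (fun a => fsum (dims (k - 1)%nat) (fun b => (W k a b) ^ 2))).

Definition in_ball (L : nat) (dims : nat -> nat) (Rad : R) (W : params) : Prop :=
  forall k, (1 <= k <= L)%nat -> frob dims W k <= Rad.

Fixpoint max_frob_upto (dims : nat -> nat) (W : params) (k : nat) : R :=
  match k with
  | O => 0
  | S O => frob dims W 1
  | S k' => Rmax (max_frob_upto dims W k') (frob dims W (S k'))
  end.

(* S has finite Lebesgue (outer) measure: it is covered by countably many
   closed intervals of finite total length. *)
Definition finite_lebesgue_measure (S : R -> Prop) : Prop :=
  exists (a b : nat -> R) (M : R),
    (forall m, a m <= b m) /\
    (forall t, S t -> exists m, a m <= t <= b m) /\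
    (forall N, fsum N (fun m => b m - a m) <= M).

From Pilot Require Import Defs.
From Stdlib Require Import Reals Lra Lia ZArith FunctionalExtensionality ClassicalEpsilon Classical.
Open Scope R_scope.

(* Along the flow the risk decreases at rate |grad R|^2, so after time 1 it stays below
   R(W(1)) < l(0) (strictly, since the initial gradient is nonzero).  The gradient in the
   first layer is the rank-one matrix m q^T with m = (W_L ... W_2)^T and
   q = (1/n) sum_i l'(p_i) z_i, where p_i = <w_prod, z_i>.  On B(R) the margins p_i are
   bounded, hence l'(p_i) <= -kappa < 0 and <u, q> <= -kappa gamma, bounding |q| below;
   and since the risk is below l(delta) for some delta > 0, some margin exceeds delta,
   which forces |m| >= delta / R.  A uniform lower bound on the speed inside B(R), together
   with the fact that coordinates move at most by (risk decrease) + O(time), shows that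
   only finitely much time (measured in cells of fixed width) is spent in B(R), and that
   the trajectory cannot stay in any ball forever. *)

Lemma fsum_ext n f g : (forall i, (i < n)%nat -> f i = g i) -> fsum n f = fsum n g.
Proof.
  induction n as [|n IH]; intros H; simpl; [reflexivity|].
  rewrite IH by (intros; apply H; lia). rewrite H by lia. reflexivity.
Qed.

Lemma fsum_zero n : fsum n (fun _ => 0) = 0.
Proof. induction n; simpl; [|rewrite IHn]; ring. Qed.

Lemma fsum_zero_ext n f : (forall i, (i < n)%nat -> f i = 0) -> fsum n f = 0.
Proof. intros H. rewrite (fsum_ext n f (fun _ => 0)) by exact H. apply fsum_zero. Qed.

Lemma fsum_add n f g : fsum n (fun i => f i + g i) = fsum n f + fsum n g.
Proof. induction n; simpl; [|rewrite IHn]; ring. Qed.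

Lemma fsum_scal_l n c f : fsum n (fun i => c * f i) = c * fsum n f.
Proof. induction n; simpl; [|rewrite IHn]; ring. Qed.

Lemma fsum_scal_r n c f : fsum n (fun i => f i * c) = fsum n f * c.
Proof. induction n; simpl; [|rewrite IHn]; ring. Qed.

Lemma fsum_opp n f : fsum n (fun i => - f i) = - fsum n f.
Proof. induction n; simpl; [|rewrite IHn]; ring. Qed.

Lemma fsum_const n c : fsum n (fun _ => c) = INR n * c.
Proof. induction n; [simpl; ring|]. rewrite S_INR; cbn [fsum]; rewrite IHn; ring. Qed.

Lemma fsum_le n f g : (forall i, (i < n)%nat -> f i <= g i) -> fsum n f <= fsum n g.
Proof.
  induction n as [|n IH]; intros H; simpl; [lra|].
  apply Rplus_le_compat; [apply IH; intros; apply H|apply H]; lia.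
Qed.

Lemma fsum_nonneg n f : (forall i, (i < n)%nat -> 0 <= f i) -> 0 <= fsum n f.
Proof. intros H. rewrite <- (fsum_zero n). apply fsum_le, H. Qed.

Lemma fsum_le_const n f c : (forall i, (i < n)%nat -> f i <= c) -> fsum n f <= INR n * c.
Proof. intros H. rewrite <- fsum_const. apply fsum_le, H. Qed.

Lemma fsum_ge_const n f c : (forall i, (i < n)%nat -> c <= f i) -> INR n * c <= fsum n f.
Proof. intros H. rewrite <- fsum_const. apply fsum_le, H. Qed.

Lemma fsum_term_le n f j :
  (forall i, (i < n)%nat -> 0 <= f i) -> (j < n)%nat -> f j <= fsum n f.
Proof.
  induction n as [|n IH]; intros H Hj; [lia|]. simpl.
  assert (0 <= fsum n f) by (apply fsum_nonneg; intros; apply H; lia).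
  destruct (Nat.eq_dec j n) as [->|Hne]; [lra|].
  assert (f j <= fsum n f) by (apply IH; [intros; apply H|]; lia).
  assert (0 <= f n) by (apply H; lia). lra.
Qed.

Lemma fsum_single n f j :
  (forall i, (i < n)%nat -> i <> j -> f i = 0) -> (j < n)%nat -> fsum n f = f j.
Proof.
  induction n as [|n IH]; intros H Hj; [lia|]. cbn [fsum].
  destruct (Nat.eq_dec j n) as [->|Hne].
  - rewrite fsum_zero_ext by (intros; apply H; lia). ring.
  - rewrite IH; [| intros; apply H; lia | lia]. rewrite (H n) by lia. ring.
Qed.

Lemma fsum_swap n m F :
  fsum n (fun i => fsum m (fun j => F i j)) = fsum m (fun j => fsum n (fun i => F i j)).
Proof. induction n; simpl; [now rewrite fsum_zero|]. rewrite IHn, <- fsum_add. reflexivity. Qed.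

Lemma fsum_succ_l n f : fsum (S n) f = f 0%nat + fsum n (fun i => f (S i)).
Proof. induction n; [simpl; ring|]. cbn [fsum] in *. rewrite IHn. ring. Qed.

Lemma fsum_telescope n g : fsum n (fun i => g i - g (S i)) = g 0%nat - g n.
Proof. induction n; cbn [fsum]; [|rewrite IHn]; ring. Qed.

Lemma quadratic_nonneg_discr A B C :
  0 <= B -> (forall lam, 0 <= A + 2 * lam * C + lam * lam * B) -> C * C <= A * B.
Proof.
  intros [HB|<-] H.
  - specialize (H (- C / B)).
    replace (A + 2 * (- C / B) * C + - C / B * (- C / B) * B) with (A - C * C / B) in H
      by (field; lra).
    apply (Rmult_le_compat_r B) in H; [|lra].
    unfold Rdiv in H. rewrite Rmult_minus_distr_r, Rmult_assoc, Rinv_l in H; lra.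
  - destruct (Req_dec C 0) as [->|HC]; [lra|].
    specialize (H (- (A + 1) / (2 * C))).
    replace (A + 2 * (- (A + 1) / (2 * C)) * C + - (A + 1) / (2 * C) * (- (A + 1) / (2 * C)) * 0)
      with (-1) in H by (field; exact HC). lra.
Qed.

Lemma fsum_Cauchy_Schwarz n f g :
  (fsum n (fun i => f i * g i)) ^ 2 <= fsum n (fun i => f i ^ 2) * fsum n (fun i => g i ^ 2).
Proof.
  rewrite <- Rsqr_pow2. apply quadratic_nonneg_discr.
  - apply fsum_nonneg; intros; apply pow2_ge_0.
  - intros lam.
    replace (fsum n (fun i => f i ^ 2) + 2 * lam * fsum n (fun i => f i * g i)
             + lam * lam * fsum n (fun i => g i ^ 2))
      with (fsum n (fun i => (f i + lam * g i) ^ 2)).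
    + apply fsum_nonneg; intros; apply pow2_ge_0.
    + rewrite <- !fsum_scal_l, <- !fsum_add. apply fsum_ext; intros; ring.
Qed.

Lemma mat_vec_Cauchy_Schwarz m n A v :
  fsum m (fun c => (fsum n (fun j => A c j * v j)) ^ 2)
  <= fsum m (fun c => fsum n (fun j => A c j ^ 2)) * fsum n (fun j => v j ^ 2).
Proof. rewrite <- fsum_scal_r. apply fsum_le; intros. apply fsum_Cauchy_Schwarz. Qed.

Lemma mat_mat_Cauchy_Schwarz p m q A B :
  fsum p (fun a => fsum q (fun b => (fsum m (fun c => A a c * B c b)) ^ 2))
  <= fsum p (fun a => fsum m (fun c => A a c ^ 2)) * fsum q (fun b => fsum m (fun c => B c b ^ 2)).
Proof.
  rewrite <- fsum_scal_r. apply fsum_le; intros a _.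
  rewrite <- fsum_scal_l. apply fsum_le; intros b _. apply fsum_Cauchy_Schwarz.
Qed.

Lemma finite_pos_lower_bound n (f : nat -> R) :
  (forall i, (i < n)%nat -> f i > 0) -> exists g, 0 < g /\ forall i, (i < n)%nat -> g <= f i.
Proof.
  induction n as [|n IH]; intros H; [exists 1; split; [lra|intros; lia]|].
  destruct IH as [g [Hg Hle]]; [intros; apply H; lia|].
  assert (f n > 0) by (apply H; lia).
  exists (Rmin g (f n)); split; [now apply Rmin_pos|].
  intros i Hi. destruct (Nat.eq_dec i n) as [->|]; [apply Rmin_r|].
  eapply Rle_trans; [apply Rmin_l|apply Hle; lia].
Qed.

Lemma derivable_pt_lim_fsum n (F : R -> nat -> R) D t :
  (forall i, (i < n)%nat -> derivable_pt_lim (fun s => F s i) t (D i)) ->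
  derivable_pt_lim (fun s => fsum n (F s)) t (fsum n D).
Proof.
  induction n as [|n IH]; intros H; cbn [fsum].
  - apply (derivable_pt_lim_const 0).
  - apply (derivable_pt_lim_plus (fun s => fsum n (F s)) (fun s => F s n));
      [apply IH; intros|]; apply H; lia.
Qed.

Lemma derivable_pt_lim_eq f t l1 l2 : derivable_pt_lim f t l1 -> l1 = l2 -> derivable_pt_lim f t l2.
Proof. now intros ? <-. Qed.

Lemma antitone_of_deriv_nonpos g g' a b :
  (forall c, a <= c <= b -> derivable_pt_lim g c (g' c)) ->
  (forall c, a <= c <= b -> g' c <= 0) -> a <= b -> g b <= g a.
Proof.
  intros Hd Hneg [Hab|<-]; [|lra].
  destruct (MVT_cor2 g g' a b Hab Hd) as [c [E Hc]].
  assert (g' c <= 0) by (apply Hneg; lra). nra.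
Qed.

Lemma decrease_of_deriv_neg f a l :
  derivable_pt_lim f a l -> l < 0 -> exists h, 0 < h /\ forall s, 0 < s <= h -> f (a + s) < f a.
Proof.
  intros Hd Hl. destruct (Hd (- l / 2) ltac:(lra)) as [[del Hdel] Hlim].
  exists (del / 2); split; [lra|]. intros s Hs.
  specialize (Hlim s ltac:(lra) ltac:(simpl; rewrite Rabs_pos_eq; lra)).
  apply Rabs_def2 in Hlim. destruct Hlim as [Hlt _].
  assert (Hq : (f (a + s) - f a) / s < 0) by lra.
  apply (Rmult_lt_compat_r s) in Hq; [|lra].
  unfold Rdiv in Hq. rewrite Rmult_assoc, Rinv_l, Rmult_1_r, Rmult_0_l in Hq; lra.
Qed.

Lemma nat_floor x : 0 <= x -> exists m, INR m <= x <= INR m + 1.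
Proof.
  intros Hx. destruct (archimed x) as [Hup _].
  assert (HN : exists N : nat, x < INR N).
  { destruct (Z_le_gt_dec 0 (up x)) as [Hz|Hz].
    - exists (Z.to_nat (up x)). rewrite INR_IZR_INZ, Z2Nat.id; auto.
    - exfalso. assert (up x <= -1)%Z by lia. apply IZR_le in H. lra. }
  destruct HN as [N HN]. induction N as [|N IH]; [simpl in HN; lra|].
  destruct (Rlt_dec x (INR N)); [now apply IH|].
  exists N. rewrite S_INR in HN. lra.
Qed.

Lemma finite_lebesgue_measure_of_cells (A : R -> Prop) (g : nat -> R) t0 h c :
  0 <= t0 -> 0 < h -> 0 < c -> (forall t, A t -> 0 <= t) ->
  (forall m, 0 <= g m) -> (forall m, g (S m) <= g m) ->
  (forall m, (exists t, A t /\ t0 + INR m * h <= t <= t0 + INR (S m) * h) ->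
     g (S m) <= g m - c * h) ->
  finite_lebesgue_measure A.
Proof.
  intros Ht0 Hh Hc HA Hg_nonneg Hg_anti Hg_cell.
  set (meets m := exists t, A t /\ t0 + INR m * h <= t <= t0 + INR (S m) * h).
  set (lo m := match m with O => 0 | S m' => t0 + INR m' * h end).
  set (hi m := match m with
               | O => t0
               | S m' => t0 + INR m' * h + (if excluded_middle_informative (meets m') then h else 0)
               end).
  exists lo, hi, (t0 + g 0%nat / c). split; [|split].
  - intros [|m]; simpl; [lra|]. destruct (excluded_middle_informative (meets m)); lra.
  - intros t Ht. pose proof (HA t Ht). destruct (Rle_dec t t0) as [Hle|Hgt].
    + exists 0%nat. simpl. lra.
    + destruct (nat_floor ((t - t0) / h)) as [m [Hm1 Hm2]]; [apply Rle_mult_inv_pos; lra|].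
      assert (E : t - t0 = (t - t0) / h * h) by (field; lra).
      assert (INR m * h <= t - t0) by (rewrite E; apply Rmult_le_compat_r; lra).
      assert (t - t0 <= (INR m + 1) * h) by (rewrite E; apply Rmult_le_compat_r; lra).
      assert (Hmeet : meets m) by (exists t; rewrite S_INR; split; [assumption|lra]).
      exists (S m). simpl. destruct (excluded_middle_informative (meets m)); [lra|contradiction].
  - intros [|N]; [simpl; pose proof (Rle_mult_inv_pos _ _ (Hg_nonneg 0%nat) Hc); lra|].
    rewrite fsum_succ_l. simpl (hi 0%nat - lo 0%nat).
    assert (Hcells : fsum N (fun i => hi (S i) - lo (S i)) <= fsum N (fun i => g i / c - g (S i) / c)).
    { apply fsum_le. intros i _. simpl.
      replace (g i / c - g (S i) / c) with ((g i - g (S i)) / c) by (field; lra).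
      destruct (excluded_middle_informative (meets i)) as [Hm|Hm].
      - pose proof (Hg_cell i Hm). apply (Rmult_le_reg_r c); [assumption|].
        unfold Rdiv. rewrite Rmult_assoc, Rinv_l; lra.
      - pose proof (Hg_anti i). pose proof (Rle_mult_inv_pos (g i - g (S i)) c). lra. }
    rewrite (fsum_telescope N (fun i => g i / c)) in Hcells.
    pose proof (Rle_mult_inv_pos _ _ (Hg_nonneg N) Hc). lra.
Qed.

(** * Directional derivatives of the network *)

Definition param_add (D1 D2 : params) : params := fun k a b => D1 k a b + D2 k a b.
Definition param_scale c (D : params) : params := fun k a b => c * D k a b.
Definition param_sum m (F : nat -> params) : params := fun k a b => fsum m (fun i => F i k a b).
Definition unit_param (k a b : nat) : params := fun k' a' b' =>
  if (Nat.eqb k' k && Nat.eqb a' a && Nat.eqb b' b)%bool then 1 else 0.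

Section PartialProdDeriv.
Variable dims : nat -> nat.

(* Product rule: the derivative of [W_k P_{k-1}] in the direction [D]. *)
Fixpoint dpartial_prod (W D : params) (k : nat) : nat -> nat -> R :=
  match k with
  | O => fun _ _ => 0
  | S k' => fun a b => fsum (dims k') (fun c =>
      D (S k') a c * partial_prod dims W k' c b + W (S k') a c * dpartial_prod W D k' c b)
  end.

Lemma derivable_pt_lim_partial_prod (C : R -> params) D t K :
  (forall k a c, (1 <= k <= K)%nat -> (a < dims k)%nat -> (c < dims (k - 1))%nat ->
     derivable_pt_lim (fun s => C s k a c) t (D k a c)) ->
  forall a b, (a < dims K)%nat ->
  derivable_pt_lim (fun s => partial_prod dims (C s) K a b) t (dpartial_prod (C t) D K a b).
Proof.
  induction K as [|K IH]; intros H a b Ha; simpl; [apply derivable_pt_lim_const|].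
  apply (derivable_pt_lim_fsum _ (fun s c => C s (S K) a c * partial_prod dims (C s) K c b)).
  intros c Hc.
  apply (derivable_pt_lim_mult (fun s => C s (S K) a c) (fun s => partial_prod dims (C s) K c b)).
  - apply H; [lia|assumption|now rewrite Nat.sub_1_r].
  - apply IH; [intros; apply H; auto; lia|assumption].
Qed.

Lemma dpartial_prod_add W D1 D2 K a b :
  dpartial_prod W (param_add D1 D2) K a b = dpartial_prod W D1 K a b + dpartial_prod W D2 K a b.
Proof.
  revert a b; induction K; intros; simpl; [ring|].
  rewrite <- fsum_add; apply fsum_ext; intros. rewrite IHK; unfold param_add; ring.
Qed.

Lemma dpartial_prod_scale W c D K a b :
  dpartial_prod W (param_scale c D) K a b = c * dpartial_prod W D K a b.
Proof.
  revert a b; induction K; intros; simpl; [ring|].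
  rewrite <- fsum_scal_l; apply fsum_ext; intros. rewrite IHK; unfold param_scale; ring.
Qed.

Lemma dpartial_prod_zero W K a b : dpartial_prod W (fun _ _ _ => 0) K a b = 0.
Proof.
  revert a b; induction K; intros; simpl; [reflexivity|].
  apply fsum_zero_ext; intros. rewrite IHK; ring.
Qed.

Definition agree_on_layers K (D1 D2 : params) :=
  forall k a b, (1 <= k <= K)%nat -> (a < dims k)%nat -> (b < dims (k - 1))%nat ->
  D1 k a b = D2 k a b.

Lemma dpartial_prod_agree W D1 D2 K :
  agree_on_layers K D1 D2 ->
  forall a b, (a < dims K)%nat -> dpartial_prod W D1 K a b = dpartial_prod W D2 K a b.
Proof.
  induction K as [|K IH]; intros H a b Ha; simpl; [reflexivity|].
  apply fsum_ext; intros c Hc.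
  rewrite IH; [| intros k a' b' ? ? ?; apply H; auto; lia | assumption].
  rewrite H; [reflexivity | lia | assumption | now rewrite Nat.sub_1_r].
Qed.

End PartialProdDeriv.

Section RiskDeriv.
Variables (n d : nat) (x : nat -> nat -> R) (y : nat -> R) (L : nat) (dims : nat -> nat).
Variables (l dl : R -> R).
Hypothesis HdL : dims L = 1%nat.
Hypothesis Hl_deriv : forall s, derivable_pt_lim l s (dl s).

Definition margin W i := fsum d (fun j => w_prod L dims W j * zdat x y i j).

Definition risk_dir W D := / INR n * fsum n (fun i =>
  dl (margin W i) * fsum d (fun j => dpartial_prod dims W D L 0 j * zdat x y i j)).

Definition sum_coords (F : nat -> nat -> nat -> R) :=
  fsum L (fun k0 => fsum (dims (S k0)) (fun a => fsum (dims k0) (fun b => F (S k0) a b))).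

Lemma derivable_pt_lim_risk (C : R -> params) D t :
  (forall k a c, valid_index L dims k a c -> derivable_pt_lim (fun s => C s k a c) t (D k a c)) ->
  derivable_pt_lim (fun s => risk l n d L dims x y (C s)) t (risk_dir (C t) D).
Proof.
  intros H. apply derivable_pt_lim_scal.
  apply (derivable_pt_lim_fsum n (fun s i => l (margin (C s) i))). intros i Hi.
  apply (derivable_pt_lim_comp (fun s => margin (C s) i) l); [|apply Hl_deriv].
  apply (derivable_pt_lim_fsum d (fun s j => w_prod L dims (C s) j * zdat x y i j)). intros j Hj.
  eapply derivable_pt_lim_eq.
  - apply derivable_pt_lim_mult; [|apply derivable_pt_lim_const].
    apply derivable_pt_lim_partial_prod; [intros; apply H; split; auto|rewrite HdL; lia].
  - cbv beta. rewrite Rmult_0_r, Rplus_0_r. reflexivity.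
Qed.

Lemma risk_dir_add W D1 D2 : risk_dir W (param_add D1 D2) = risk_dir W D1 + risk_dir W D2.
Proof.
  unfold risk_dir. rewrite <- Rmult_plus_distr_l, <- fsum_add. f_equal.
  apply fsum_ext; intros. rewrite <- Rmult_plus_distr_l, <- fsum_add. f_equal.
  apply fsum_ext; intros. rewrite dpartial_prod_add. ring.
Qed.

Lemma risk_dir_scale W c D : risk_dir W (param_scale c D) = c * risk_dir W D.
Proof.
  unfold risk_dir.
  rewrite (fsum_ext n _ (fun i => c * (dl (margin W i) *
    fsum d (fun j => dpartial_prod dims W D L 0 j * zdat x y i j)))), fsum_scal_l; [ring|].
  intros i _. rewrite <- Rmult_assoc, (Rmult_comm c), Rmult_assoc. f_equal.
  rewrite <- fsum_scal_l.
  apply fsum_ext; intros. rewrite dpartial_prod_scale. ring.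
Qed.

Lemma risk_dir_sum W m F : risk_dir W (param_sum m F) = fsum m (fun i => risk_dir W (F i)).
Proof.
  induction m as [|m IH].
  - unfold risk_dir. rewrite fsum_zero_ext; [simpl; ring|]. intros.
    rewrite fsum_zero_ext; [ring|]. intros. rewrite dpartial_prod_zero. ring.
  - change (param_sum (S m) F) with (param_add (param_sum m F) (F m)).
    rewrite risk_dir_add, IH. reflexivity.
Qed.

Lemma risk_dir_agree W D1 D2 : agree_on_layers dims L D1 D2 -> risk_dir W D1 = risk_dir W D2.
Proof.
  intros H. unfold risk_dir. f_equal. apply fsum_ext; intros. f_equal.
  apply fsum_ext; intros. rewrite (dpartial_prod_agree dims W D1 D2 L H); [reflexivity|lia].
Qed.

Lemma param_decomposition D :
  agree_on_layers dims L D (param_sum L (fun k0 => param_sum (dims (S k0)) (fun a =>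
    param_sum (dims k0) (fun b => param_scale (D (S k0) a b) (unit_param (S k0) a b))))).
Proof.
  intros k a b Hk Ha Hb. unfold param_sum, param_scale, unit_param.
  rewrite (fsum_single L _ (k - 1)); [| |lia].
  2:{ intros k0 _ Hne. apply fsum_zero_ext; intros. apply fsum_zero_ext; intros.
      replace (Nat.eqb k (S k0)) with false by (symmetry; apply Nat.eqb_neq; lia). simpl. ring. }
  replace (S (k - 1)) with k by lia.
  rewrite (fsum_single _ _ a); [| |assumption].
  2:{ intros a' _ Hne. apply fsum_zero_ext; intros.
      replace (Nat.eqb a a') with false by (symmetry; apply Nat.eqb_neq; lia).
      rewrite Nat.eqb_refl. simpl. ring. }
  rewrite (fsum_single _ _ b); [| |assumption].
  2:{ intros b' _ Hne. replace (Nat.eqb b b') with false by (symmetry; apply Nat.eqb_neq; lia).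
      rewrite !Nat.eqb_refl. simpl. ring. }
  rewrite !Nat.eqb_refl. simpl. ring.
Qed.

Lemma risk_dir_decomposition W D :
  risk_dir W D = sum_coords (fun k a b => D k a b * risk_dir W (unit_param k a b)).
Proof.
  rewrite (risk_dir_agree _ _ _ (param_decomposition D)), risk_dir_sum.
  apply fsum_ext; intros. rewrite risk_dir_sum. apply fsum_ext; intros.
  rewrite risk_dir_sum. apply fsum_ext; intros. apply risk_dir_scale.
Qed.

Lemma gradient_coord W G :
  is_gradient L dims (risk l n d L dims x y) W G ->
  forall k a b, valid_index L dims k a b -> G k a b = risk_dir W (unit_param k a b).
Proof.
  intros HG k a b Hv.
  apply (uniqueness_limite (fun s => risk l n d L dims x y (perturb W k a b s)) 0); [now apply HG|].
  assert (E : perturb W k a b 0 = W).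
  { unfold perturb. extensionality k'; extensionality a'; extensionality b'.
    destruct (_ && _)%bool; ring. }
  eapply derivable_pt_lim_eq; [apply derivable_pt_lim_risk|now rewrite E].
  intros k' a' c _. unfold perturb, unit_param.
  destruct (_ && _)%bool; [|apply derivable_pt_lim_const].
  eapply derivable_pt_lim_eq;
    [apply (derivable_pt_lim_plus (fun _ => W k' a' c) id);
       [apply derivable_pt_lim_const|apply derivable_pt_lim_id]|ring].
Qed.

End RiskDeriv.

(** * Splitting off the first layer *)

Section FirstLayer.
Variable dims : nat -> nat.

(* [upper_prod W k] is [W_k ... W_2], the identity for [k <= 1]. *)
Fixpoint upper_prod (W : params) (k : nat) : nat -> nat -> R :=
  match k with
  | O => fun a b => if Nat.eqb a b then 1 else 0
  | S k' => match k' with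
            | O => fun a b => if Nat.eqb a b then 1 else 0
            | S _ => fun a b => fsum (dims k') (fun c => W k a c * upper_prod W k' c b)
            end
  end.

Lemma upper_prod_succ W k a b : (1 <= k)%nat ->
  upper_prod W (S k) a b = fsum (dims k) (fun c => W (S k) a c * upper_prod W k c b).
Proof. intros. destruct k; [lia|reflexivity]. Qed.

Lemma partial_prod_split_first W k : (1 <= k)%nat ->
  forall a b, (a < dims k)%nat -> (b < dims 0)%nat ->
  partial_prod dims W k a b = fsum (dims 1) (fun c => upper_prod W k a c * W 1%nat c b).
Proof.
  induction k as [|k IH]; intros Hk a b Ha Hb; [lia|]. destruct k.
  - simpl. rewrite (fsum_single _ _ b), (fsum_single _ _ a), !Nat.eqb_refl; [ring| |assumption| |assumption].
    + intros i _ H. replace (Nat.eqb a i) with false by (symmetry; apply Nat.eqb_neq; lia). ring.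
    + intros i _ H. replace (Nat.eqb i b) with false by (symmetry; apply Nat.eqb_neq; lia). ring.
  - change (partial_prod dims W (S (S k)) a b) with
      (fsum (dims (S k)) (fun c => W (S (S k)) a c * partial_prod dims W (S k) c b)).
    rewrite (fsum_ext _ _ (fun c => fsum (dims 1) (fun e =>
      W (S (S k)) a c * upper_prod W (S k) c e * W 1%nat e b))).
    + rewrite fsum_swap. apply fsum_ext; intros e _.
      rewrite upper_prod_succ, <- fsum_scal_r by lia. reflexivity.
    + intros c Hc. rewrite IH, <- fsum_scal_l by (auto; lia). apply fsum_ext; intros; ring.
Qed.

Lemma dpartial_prod_unit_first W a' b' :
  (a' < dims 1)%nat -> (b' < dims 0)%nat ->
  forall k, (1 <= k)%nat -> forall a b, (a < dims k)%nat ->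
  dpartial_prod dims W (unit_param 1 a' b') k a b
  = upper_prod W k a a' * (if Nat.eqb b b' then 1 else 0).
Proof.
  intros Ha' Hb'. induction k as [|k IH]; intros Hk a b Ha; [lia|]. destruct k.
  - simpl. rewrite (fsum_single _ _ b'); [|intros i _ H|assumption]; unfold unit_param.
    + rewrite !Nat.eqb_refl, (Nat.eqb_sym b' b).
      destruct (Nat.eqb a a'), (Nat.eqb b b'); simpl; ring.
    + replace (Nat.eqb i b') with false by (symmetry; apply Nat.eqb_neq; lia).
      rewrite Bool.andb_false_r. ring.
  - change (dpartial_prod dims W (unit_param 1 a' b') (S (S k)) a b) with
      (fsum (dims (S k)) (fun c => unit_param 1 a' b' (S (S k)) a c * partial_prod dims W (S k) c b
        + W (S (S k)) a c * dpartial_prod dims W (unit_param 1 a' b') (S k) c b)).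
    rewrite upper_prod_succ, <- fsum_scal_r by lia. apply fsum_ext; intros c Hc.
    rewrite IH by (auto; lia). unfold unit_param. simpl. ring.
Qed.

Definition frob2_mat (M : nat -> nat -> R) p q := fsum p (fun a => fsum q (fun b => M a b ^ 2)).
Definition frob2 (W : params) k := frob2_mat (W k) (dims k) (dims (k - 1)).

Lemma frob2_mat_nonneg M p q : 0 <= frob2_mat M p q.
Proof. apply fsum_nonneg; intros; apply fsum_nonneg; intros; apply pow2_ge_0. Qed.

Lemma frob_sqrt_frob2 W k : frob dims W k = sqrt (frob2 W k).
Proof. reflexivity. Qed.

Lemma frob2_le_of_frob_le W k r : frob dims W k <= r -> frob2 W k <= r ^ 2.
Proof.
  rewrite frob_sqrt_frob2. intros H.
  rewrite <- (sqrt_sqrt (frob2 W k)) by apply frob2_mat_nonneg.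
  pose proof (sqrt_pos (frob2 W k)). simpl. nra.
Qed.

Lemma frob2_le_of_coord_close W W' k r del :
  frob2 W k <= r ^ 2 -> INR (dims k) * INR (dims (k - 1)) * del ^ 2 <= r ^ 2 ->
  (forall a b, (a < dims k)%nat -> (b < dims (k - 1))%nat -> Rabs (W' k a b - W k a b) <= del) ->
  frob2 W' k <= (2 * r) ^ 2.
Proof.
  intros HW Hdel Hclose.
  apply Rle_trans with
    (fsum (dims k) (fun a => fsum (dims (k - 1)) (fun b => 2 * W k a b ^ 2 + 2 * del ^ 2))).
  - apply fsum_le; intros a Ha. apply fsum_le; intros b Hb.
    specialize (Hclose a b Ha Hb).
    assert ((W' k a b - W k a b) ^ 2 <= del ^ 2).
    { rewrite <- (pow2_abs (W' k a b - W k a b)). apply pow_incr. split; [apply Rabs_pos|assumption]. }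
    assert (0 <= (2 * W k a b - W' k a b) ^ 2) by apply pow2_ge_0. nra.
  - rewrite (fsum_ext _ _ (fun a =>
      2 * fsum (dims (k - 1)) (fun b => W k a b ^ 2) + INR (dims (k - 1)) * (2 * del ^ 2)))
      by (intros; now rewrite fsum_add, fsum_scal_l, fsum_const).
    rewrite fsum_add, fsum_scal_l, fsum_const. fold (frob2_mat (W k) (dims k) (dims (k - 1))).
    fold (frob2 W k). nra.
Qed.

Lemma frob2_upper_prod_le W r : forall k, (1 <= k)%nat ->
  (forall j, (2 <= j <= k)%nat -> frob2 W j <= r ^ 2) ->
  frob2_mat (upper_prod W k) (dims k) (dims 1) <= INR (dims 1) * (r ^ 2) ^ (k - 1).
Proof.
  induction k as [|k IH]; intros Hk H; [lia|]. destruct k.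
  - unfold frob2_mat. simpl. rewrite Rmult_1_r, <- (Rmult_1_r (INR (dims 1))).
    apply fsum_le_const. intros a Ha.
    rewrite (fsum_single _ _ a), Nat.eqb_refl; [lra| |assumption].
    intros i _ Hi. replace (Nat.eqb a i) with false by (symmetry; apply Nat.eqb_neq; lia). ring.
  - assert (IHk := IH ltac:(lia) ltac:(intros; apply H; lia)).
    assert (Htop := H (S (S k)) ltac:(lia)).
    unfold frob2 in Htop. replace (S (S k) - 1)%nat with (S k) in Htop by lia.
    replace (S k - 1)%nat with k in IHk by lia. replace (S (S k) - 1)%nat with (S k) by lia.
    unfold frob2_mat at 1.
    rewrite (fsum_ext _ _ (fun a => fsum (dims 1) (fun b =>
      (fsum (dims (S k)) (fun c => W (S (S k)) a c * upper_prod W (S k) c b)) ^ 2)))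
      by (intros; apply fsum_ext; intros; now rewrite upper_prod_succ by lia).
    eapply Rle_trans; [apply mat_mat_Cauchy_Schwarz|].
    rewrite (fsum_swap (dims 1) (dims (S k)) (fun b c => upper_prod W (S k) c b ^ 2)).
    change (fsum (dims (S k)) (fun a => fsum (dims 1) (fun b => upper_prod W (S k) a b ^ 2)))
      with (frob2_mat (upper_prod W (S k)) (dims (S k)) (dims 1)).
    change (fsum (dims (S (S k))) (fun a => fsum (dims (S k)) (fun c => W (S (S k)) a c ^ 2)))
      with (frob2_mat (W (S (S k))) (dims (S (S k))) (dims (S k))).
    rewrite <- tech_pow_Rmult.
    replace (INR (dims 1) * (r ^ 2 * (r ^ 2) ^ k)) with (r ^ 2 * (INR (dims 1) * (r ^ 2) ^ k)) by ring.
    apply Rmult_le_compat; auto using frob2_mat_nonneg.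
Qed.

End FirstLayer.

Lemma frob_le_max_frob_upto dims W L k : (1 <= k <= L)%nat -> frob dims W k <= max_frob_upto dims W L.
Proof.
  induction L as [|L IH]; intros Hk; [lia|]. destruct L.
  - replace k with 1%nat by lia. simpl. lra.
  - change (max_frob_upto dims W (S (S L))) with
      (Rmax (max_frob_upto dims W (S L)) (frob dims W (S (S L)))).
    destruct (Nat.eq_dec k (S (S L))) as [->|]; [apply Rmax_r|].
    eapply Rle_trans; [apply IH; lia|apply Rmax_l].
Qed.

Section Loss.
Variables l dl : R -> R.
Hypothesis Hl_deriv : forall s, derivable_pt_lim l s (dl s).
Hypothesis Hdl_neg : forall s, dl s < 0.

Lemma loss_antitone a b : a <= b -> l b <= l a.
Proof.
  apply antitone_of_deriv_nonpos with (g' := dl); intros; [apply Hl_deriv|left; apply Hdl_neg].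
Qed.

Lemma loss_nonneg :
  (forall eps, 0 < eps -> exists N, forall s, N < s -> Rabs (l s) < eps) -> forall s, 0 <= l s.
Proof.
  intros Hl_pinf s. apply Rnot_lt_le. intros Hneg.
  destruct (Hl_pinf (- l s) ltac:(lra)) as [N HN].
  specialize (HN (Rmax N s + 1) ltac:(pose proof (Rmax_l N s); lra)).
  assert (l (Rmax N s + 1) <= l s) by (apply loss_antitone; pose proof (Rmax_r N s); lra).
  pose proof (Rle_abs (- l (Rmax N s + 1))). rewrite Rabs_Ropp in *. lra.
Qed.

Lemma loss_exceeds_near_zero r : r < l 0 -> exists del, 0 < del /\ r < l del.
Proof.
  intros Hr.
  destruct (derivable_continuous_pt l 0 (exist _ (dl 0) (Hl_deriv 0)) (l 0 - r) ltac:(lra))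
    as [alp [Halp Hc]].
  exists (alp / 2); split; [lra|].
  assert (Hlt : Rabs (l (alp / 2) - l 0) < l 0 - r).
  { apply (Hc (alp / 2)). split; [split; [exact I|lra]|].
    simpl. unfold Rdist. rewrite Rminus_0_r, Rabs_pos_eq; lra. }
  apply Rabs_def2 in Hlt. lra.
Qed.

End Loss.

(** * Gradient of the first layer on a sublevel set of the risk *)

Section FirstLayerGradient.
Variables (n d : nat) (x : nat -> nat -> R) (y : nat -> R) (L : nat) (dims : nat -> nat).
Variables (l dl : R -> R) (u : nat -> R).
Hypothesis Hn : (0 < n)%nat.
Hypothesis Hxnorm : forall i, (i < n)%nat -> fsum d (fun j => (x i j) ^ 2) <= 1.
Hypothesis Hy : forall i, (i < n)%nat -> y i = 1 \/ y i = -1.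
Hypothesis Hu1 : fsum d (fun j => (u j) ^ 2) = 1.
Hypothesis Hu2 : forall i, (i < n)%nat -> fsum d (fun j => u j * zdat x y i j) > 0.
Hypothesis HL : (1 <= L)%nat.
Hypothesis Hd0 : dims 0%nat = d.
Hypothesis HdL : dims L = 1%nat.
Hypothesis Hl_deriv : forall s, derivable_pt_lim l s (dl s).
Hypothesis Hdl_cont : continuity dl.
Hypothesis Hdl_neg : forall s, dl s < 0.

Local Notation margin := (margin d x y L dims).
Local Notation risk := (risk l n d L dims x y).

Definition head_vec W c := upper_prod dims W L 0 c.
Definition head_norm2 W := fsum (dims 1) (fun c => head_vec W c ^ 2).
Definition loss_grad_vec W b := / INR n * fsum n (fun i => dl (margin W i) * zdat x y i b).
Definition loss_grad_norm2 W := fsum d (fun b => loss_grad_vec W b ^ 2).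

Lemma head_norm2_nonneg W : 0 <= head_norm2 W.
Proof. apply fsum_nonneg; intros; apply pow2_ge_0. Qed.

Lemma zdat_norm2_le i : (i < n)%nat -> fsum d (fun j => zdat x y i j ^ 2) <= 1.
Proof.
  intros Hi. rewrite (fsum_ext _ _ (fun j => x i j ^ 2)); [now apply Hxnorm|].
  intros; unfold zdat; destruct (Hy i Hi) as [E|E]; rewrite E; ring.
Qed.

Lemma risk_dir_unit_first W a b : (a < dims 1)%nat -> (b < d)%nat ->
  risk_dir n d x y L dims dl W (unit_param 1 a b) = head_vec W a * loss_grad_vec W b.
Proof.
  intros Ha Hb. unfold risk_dir, loss_grad_vec.
  rewrite (fsum_ext n _ (fun i => head_vec W a * (dl (margin W i) * zdat x y i b))),
    fsum_scal_l; [ring|].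
  intros i Hi. rewrite (fsum_single d _ b); [| |assumption]; [|intros j Hj Hne];
    rewrite (dpartial_prod_unit_first dims W a b Ha ltac:(now rewrite Hd0) L HL)
      by (rewrite HdL; lia).
  - rewrite Nat.eqb_refl. unfold head_vec. ring.
  - replace (Nat.eqb j b) with false by (symmetry; apply Nat.eqb_neq; lia). ring.
Qed.

Lemma margin_split_first W i :
  margin W i = fsum (dims 1) (fun c => head_vec W c * fsum d (fun j => W 1%nat c j * zdat x y i j)).
Proof.
  unfold margin, w_prod.
  rewrite (fsum_ext d _ (fun j => fsum (dims 1) (fun c => head_vec W c * (W 1%nat c j * zdat x y i j)))).
  - rewrite fsum_swap. apply fsum_ext; intros. apply fsum_scal_l.
  - intros j Hj. rewrite partial_prod_split_first, <- fsum_scal_r by (rewrite ?HdL, ?Hd0; lia).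
    apply fsum_ext; intros. unfold head_vec. ring.
Qed.

Lemma margin_sq_le W i : (i < n)%nat -> margin W i ^ 2 <= head_norm2 W * frob2 dims W 1.
Proof.
  intros Hi. rewrite margin_split_first.
  eapply Rle_trans; [apply fsum_Cauchy_Schwarz|].
  apply Rmult_le_compat_l; [apply head_norm2_nonneg|].
  eapply Rle_trans; [apply mat_vec_Cauchy_Schwarz|].
  rewrite <- (Rmult_1_r (frob2 dims W 1)).
  apply Rmult_le_compat; [apply (frob2_mat_nonneg (W 1%nat))|apply fsum_nonneg; intros; apply pow2_ge_0| |
    now apply zdat_norm2_le].
  unfold frob2, frob2_mat. simpl (1 - 1)%nat. rewrite Hd0. lra.
Qed.

Lemma frob_grad_first_layer W G :
  is_gradient L dims risk W G -> frob dims G 1 = sqrt (head_norm2 W * loss_grad_norm2 W).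
Proof.
  intros HG. unfold frob. simpl (1 - 1)%nat. rewrite Hd0. f_equal.
  unfold head_norm2. rewrite <- fsum_scal_r. apply fsum_ext; intros a Ha.
  unfold loss_grad_norm2. rewrite <- fsum_scal_l. apply fsum_ext; intros b Hb.
  rewrite (gradient_coord n d x y L dims l dl HdL Hl_deriv W G HG), risk_dir_unit_first; [ring|auto..].
  unfold valid_index. simpl (1 - 1)%nat. rewrite Hd0. repeat split; auto; lia.
Qed.

Lemma head_norm2_le_in_ball W r :
  in_ball L dims r W -> head_norm2 W <= INR (dims 1) * (r ^ 2) ^ (L - 1).
Proof.
  intros HW. replace (head_norm2 W) with (frob2_mat (upper_prod dims W L) (dims L) (dims 1))
    by (rewrite HdL; unfold frob2_mat, head_norm2, head_vec; simpl; ring).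
  apply frob2_upper_prod_le; [assumption|].
  intros j Hj. apply frob2_le_of_frob_le, HW. lia.
Qed.

Lemma loss_grad_norm2_lower W kap gam :
  0 <= kap -> 0 <= gam ->
  (forall i, (i < n)%nat -> dl (margin W i) <= - kap) ->
  (forall i, (i < n)%nat -> gam <= fsum d (fun j => u j * zdat x y i j)) ->
  (kap * gam) ^ 2 <= loss_grad_norm2 W.
Proof.
  intros Hkap Hgam Hdl Hu.
  assert (Hnpos : 0 < INR n) by now apply lt_0_INR.
  assert (Hdir : fsum d (fun b => u b * loss_grad_vec W b)
                 = / INR n * fsum n (fun i => dl (margin W i) * fsum d (fun b => u b * zdat x y i b))).
  { unfold loss_grad_vec.
    rewrite (fsum_ext d _ (fun b => / INR n * fsum n (fun i => dl (margin W i) * (u b * zdat x y i b)))).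
    - rewrite fsum_scal_l, fsum_swap. f_equal. apply fsum_ext; intros.
      rewrite <- fsum_scal_l. apply fsum_ext; intros; ring.
    - intros b _. rewrite Rmult_comm, Rmult_assoc, <- fsum_scal_r. f_equal. apply fsum_ext; intros; ring. }
  assert (Hneg : fsum d (fun b => u b * loss_grad_vec W b) <= - (kap * gam)).
  { rewrite Hdir.
    assert (Hsum : fsum n (fun i => dl (margin W i) * fsum d (fun b => u b * zdat x y i b))
                   <= INR n * (- (kap * gam))).
    { apply fsum_le_const. intros i Hi. pose proof (Hdl i Hi). pose proof (Hu i Hi). nra. }
    apply (Rmult_le_compat_l (/ INR n)) in Hsum; [|left; now apply Rinv_0_lt_compat].
    rewrite <- Rmult_assoc, Rinv_l in Hsum; lra. }
  pose proof (fsum_Cauchy_Schwarz d u (loss_grad_vec W)) as HCS.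
  rewrite Hu1 in HCS. fold (loss_grad_norm2 W) in HCS.
  assert (0 <= kap * gam) by nra. nra.
Qed.

Lemma head_norm2_lower W r del :
  0 < r -> 0 < del -> frob2 dims W 1 <= r ^ 2 -> risk W < l del -> del ^ 2 / r ^ 2 <= head_norm2 W.
Proof.
  intros Hr Hdel H1 Hrisk.
  assert (Hr2 : 0 < r ^ 2) by (apply pow_lt; lra).
  destruct (classic (exists i, (i < n)%nat /\ margin W i > del)) as [[i [Hi Hm]]|Hno].
  - apply (Rmult_le_reg_r (r ^ 2)); [assumption|].
    unfold Rdiv. rewrite Rmult_assoc, Rinv_l, Rmult_1_r by lra.
    pose proof (margin_sq_le W i Hi). pose proof (head_norm2_nonneg W).
    assert (del ^ 2 <= margin W i ^ 2) by (apply pow_incr; lra).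
    assert (head_norm2 W * frob2 dims W 1 <= head_norm2 W * r ^ 2) by (apply Rmult_le_compat_l; lra).
    lra.
  - exfalso.
    assert (Hge : INR n * l del <= fsum n (fun i => l (margin W i))).
    { apply fsum_ge_const. intros i Hi. apply (loss_antitone l dl Hl_deriv Hdl_neg).
      apply Rnot_lt_le. intros Hlt. apply Hno. exists i. split; [assumption|lra]. }
    assert (Hnpos : 0 < INR n) by now apply lt_0_INR.
    apply (Rmult_le_compat_l (/ INR n)) in Hge; [|left; now apply Rinv_0_lt_compat].
    rewrite <- Rmult_assoc, Rinv_l in Hge by lra.
    unfold Defs.risk in Hrisk. change (fun i => l (fsum d (fun j => w_prod L dims W j * zdat x y i j)))
      with (fun i => l (margin W i)) in Hrisk. lra.
Qed.

Lemma margin_sq_le_in_ball W r i : (i < n)%nat -> in_ball L dims r W ->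
  margin W i ^ 2 <= INR (dims 1) * (r ^ 2) ^ (L - 1) * r ^ 2.
Proof.
  intros Hi HW. eapply Rle_trans; [now apply margin_sq_le|].
  apply Rmult_le_compat; [apply head_norm2_nonneg|apply frob2_mat_nonneg| |].
  - now apply head_norm2_le_in_ball.
  - apply frob2_le_of_frob_le, HW. lia.
Qed.

Lemma risk_sublevel_grad_lower rad r : 0 < rad -> r < l 0 ->
  exists eps, 0 < eps /\ forall W, in_ball L dims rad W -> risk W <= r ->
  forall G, is_gradient L dims risk W G -> frob dims G 1 >= eps.
Proof.
  intros Hrad Hr.
  destruct (loss_exceeds_near_zero l dl Hl_deriv r Hr) as [del [Hdel Hldel]].
  set (B := INR (dims 1) * (rad ^ 2) ^ (L - 1) * rad ^ 2).
  assert (HB : 0 <= B) by (unfold B; apply Rmult_le_pos;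
    [apply Rmult_le_pos; [apply pos_INR|apply pow_le, pow2_ge_0]|apply pow2_ge_0]).
  destruct (continuity_ab_maj dl (- (1 + B)) (1 + B)) as [Mx [HMx _]];
    [lra|intros; apply Hdl_cont|].
  set (kap := - dl Mx). assert (Hkap : 0 < kap) by (unfold kap; pose proof (Hdl_neg Mx); lra).
  destruct (finite_pos_lower_bound n _ Hu2) as [gam [Hgam Hgam_le]].
  exists (sqrt (del ^ 2 / rad ^ 2 * (kap * gam) ^ 2)). split.
  { apply sqrt_lt_R0, Rmult_lt_0_compat;
      [apply Rdiv_lt_0_compat; apply pow_lt; lra|apply pow_lt; nra]. }
  intros W HW HrW G HG.
  assert (Hdl : forall i, (i < n)%nat -> dl (margin W i) <= - kap).
  { intros i Hi. unfold kap. rewrite Ropp_involutive. apply HMx.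
    pose proof (margin_sq_le_in_ball W rad i Hi HW). fold B in H. split; nra. }
  rewrite (frob_grad_first_layer W G HG). apply Rle_ge, sqrt_le_1_alt.
  apply Rmult_le_compat.
  - apply Rle_mult_inv_pos; [apply pow2_ge_0|apply pow_lt; lra].
  - apply pow2_ge_0.
  - apply head_norm2_lower; [lra|lra| |lra]. apply frob2_le_of_frob_le, HW. lia.
  - apply loss_grad_norm2_lower; auto; lra.
Qed.

End FirstLayerGradient.

(** * Along the gradient flow *)

Section Flow.
Variables (n d : nat) (x : nat -> nat -> R) (y : nat -> R) (L : nat) (dims : nat -> nat).
Variables (l dl : R -> R) (u : nat -> R).
Hypothesis Hn : (0 < n)%nat.
Hypothesis Hxnorm : forall i, (i < n)%nat -> fsum d (fun j => (x i j) ^ 2) <= 1.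
Hypothesis Hy : forall i, (i < n)%nat -> y i = 1 \/ y i = -1.
Hypothesis Hu1 : fsum d (fun j => (u j) ^ 2) = 1.
Hypothesis Hu2 : forall i, (i < n)%nat -> fsum d (fun j => u j * zdat x y i j) > 0.
Hypothesis HL : (1 <= L)%nat.
Hypothesis Hd0 : dims 0%nat = d.
Hypothesis HdL : dims L = 1%nat.
Hypothesis Hl_deriv : forall s, derivable_pt_lim l s (dl s).
Hypothesis Hdl_cont : continuity dl.
Hypothesis Hdl_neg : forall s, dl s < 0.
Hypothesis Hl_pinf : forall eps, 0 < eps -> exists N, forall s, N < s -> Rabs (l s) < eps.
Variables W V : R -> params.
Hypothesis HWderiv : forall t, 0 <= t -> forall k a b, valid_index L dims k a b ->
  deriv_nonneg (fun s => W s k a b) t (V t k a b).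
Hypothesis Hflow : forall t, 0 <= t ->
  is_gradient L dims (risk l n d L dims x y) (W t) (fun k a b => - V t k a b).
Hypothesis Hinit_grad : forall G, is_gradient L dims (risk l n d L dims x y) (W 0) G ->
  exists k a b, valid_index L dims k a b /\ G k a b <> 0.
Hypothesis Hinit_risk : risk l n d L dims x y (W 0) <= l 0.

Local Notation risk := (risk l n d L dims x y).

(* The trajectory is continued affinely to negative times, which turns the one-sided
   derivative at [0] into a two-sided one. *)
Definition flow_ext (s : R) : params := fun k a b =>
  if Rle_dec 0 s then W s k a b else W 0 k a b + s * V 0 k a b.

Definition risk_along s := risk (flow_ext s).

Definition speed2 t := sum_coords L dims (fun k a b => V t k a b ^ 2).

Lemma flow_ext_nonneg t : 0 <= t -> flow_ext t = W t.
Proof.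
  intros Ht. unfold flow_ext. extensionality k; extensionality a; extensionality b.
  destruct (Rle_dec 0 t); [reflexivity|lra].
Qed.

Lemma risk_along_nonneg_time t : 0 <= t -> risk_along t = risk (W t).
Proof. intros. unfold risk_along. now rewrite flow_ext_nonneg. Qed.

Lemma derivable_pt_lim_flow_ext t k a b : 0 <= t -> valid_index L dims k a b ->
  derivable_pt_lim (fun s => flow_ext s k a b) t (V t k a b).
Proof.
  intros Ht Hv eps Heps. destruct (HWderiv t Ht k a b Hv eps Heps) as [del [Hdel H]].
  destruct Ht as [Ht| <-].
  - exists (mkposreal _ (Rmin_pos del t Hdel Ht)). simpl. intros h Hh Hlt.
    pose proof (Rmin_l del t). pose proof (Rmin_r del t). pose proof (Rle_abs (- h)).
    rewrite Rabs_Ropp in *. unfold flow_ext.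
    destruct (Rle_dec 0 (t + h)); [|lra]. destruct (Rle_dec 0 t); [|lra].
    apply H; auto; lra.
  - exists (mkposreal _ Hdel). simpl. intros h Hh Hlt. unfold flow_ext.
    destruct (Rle_dec 0 0); [|lra]. destruct (Rle_dec 0 (0 + h)); [now apply H|].
    replace ((W 0 k a b + (0 + h) * V 0 k a b - W 0 k a b) / h - V 0 k a b) with 0
      by (field; assumption).
    now rewrite Rabs_R0.
Qed.

Lemma derivable_pt_lim_risk_along t : 0 <= t -> derivable_pt_lim risk_along t (- speed2 t).
Proof.
  intros Ht. eapply derivable_pt_lim_eq.
  - apply (derivable_pt_lim_risk n d x y L dims l dl HdL Hl_deriv flow_ext (V t) t).
    intros; now apply derivable_pt_lim_flow_ext.
  - rewrite flow_ext_nonneg, risk_dir_decomposition by assumption.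
    unfold speed2, sum_coords. rewrite <- fsum_opp. apply fsum_ext; intros.
    rewrite <- fsum_opp. apply fsum_ext; intros. rewrite <- fsum_opp. apply fsum_ext; intros.
    rewrite <- (gradient_coord n d x y L dims l dl HdL Hl_deriv _ _ (Hflow t Ht));
      [ring|unfold valid_index; rewrite Nat.sub_1_r; simpl; repeat split; lia].
Qed.

Lemma speed2_nonneg t : 0 <= speed2 t.
Proof.
  apply fsum_nonneg; intros; apply fsum_nonneg; intros; apply fsum_nonneg; intros; apply pow2_ge_0.
Qed.

Lemma speed2_coord_le t k a b : valid_index L dims k a b -> V t k a b ^ 2 <= speed2 t.
Proof.
  intros [Hk [Ha Hb]]. destruct k as [|k0]; [lia|]. rewrite Nat.sub_1_r in Hb. simpl in Hb.
  unfold speed2, sum_coords.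
  eapply Rle_trans; [|apply (fsum_term_le L _ k0); [intros; apply fsum_nonneg; intros;
    apply fsum_nonneg; intros; apply pow2_ge_0|lia]].
  eapply Rle_trans; [|apply (fsum_term_le _ _ a); [intros; apply fsum_nonneg; intros;
    apply pow2_ge_0|assumption]].
  apply (fsum_term_le _ (fun b => V t (S k0) a b ^ 2)); [intros; apply pow2_ge_0|assumption].
Qed.

Lemma frob2_first_le_speed2 t : frob2 dims (V t) 1 <= speed2 t.
Proof.
  apply (fsum_term_le L (fun k0 => fsum (dims (S k0)) (fun a => fsum (dims k0) (fun b =>
    V t (S k0) a b ^ 2))) 0%nat); [|lia].
  intros; apply fsum_nonneg; intros; apply fsum_nonneg; intros; apply pow2_ge_0.
Qed.

Lemma risk_along_antitone a b : 0 <= a -> a <= b -> risk_along b <= risk_along a.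
Proof.
  intros Ha. apply antitone_of_deriv_nonpos with (g' := fun c => - speed2 c); intros c Hc.
  - apply derivable_pt_lim_risk_along; lra.
  - pose proof (speed2_nonneg c); lra.
Qed.

Lemma risk_along_decrease a b c : 0 <= a -> a <= b ->
  (forall s, a <= s <= b -> c <= speed2 s) -> risk_along b <= risk_along a - c * (b - a).
Proof.
  intros Ha Hab Hc.
  assert (risk_along b + c * b <= risk_along a + c * a); [|lra].
  apply (antitone_of_deriv_nonpos (fun s => risk_along s + c * s) (fun s => - speed2 s + c * 1));
    [intros s Hs..|assumption].
  - apply (derivable_pt_lim_plus risk_along (fun s => c * s)); [apply derivable_pt_lim_risk_along; lra|].
    apply derivable_pt_lim_scal, derivable_pt_lim_id.
  - pose proof (Hc s Hs); lra.
Qed.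

Lemma risk_along_nonneg s : 0 <= risk_along s.
Proof.
  apply Rmult_le_pos; [left; apply Rinv_0_lt_compat, lt_0_INR; assumption|].
  apply fsum_nonneg; intros. now apply (loss_nonneg l dl).
Qed.

Lemma speed2_pos_0 : 0 < speed2 0.
Proof.
  destruct (Hinit_grad _ (Hflow 0 (Rle_refl 0))) as [k [a [b [Hv Hne]]]].
  pose proof (speed2_coord_le 0 k a b Hv).
  assert (0 < V 0 k a b ^ 2); [|lra].
  rewrite <- Rsqr_pow2. apply Rsqr_pos_lt. intros E. apply Hne. rewrite E. ring.
Qed.

Lemma risk_along_1_lt_loss_0 : risk_along 1 < l 0.
Proof.
  destruct (decrease_of_deriv_neg risk_along 0 _ (derivable_pt_lim_risk_along 0 (Rle_refl 0)))
    as [h [Hh Hdecr]]; [pose proof speed2_pos_0; lra|].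
  set (s := Rmin h 1).
  assert (Hs : 0 < s <= h) by (split; [apply Rmin_pos; lra|apply Rmin_l]).
  specialize (Hdecr s Hs). rewrite Rplus_0_l in Hdecr.
  pose proof (risk_along_antitone s 1 ltac:(lra) (Rmin_r h 1)).
  rewrite (risk_along_nonneg_time 0) in Hdecr by lra. lra.
Qed.

Lemma first_layer_grad_lower_bound rad : 0 < rad -> exists eps, 0 < eps /\
  forall t, 1 <= t -> in_ball L dims rad (W t) ->
  forall G, is_gradient L dims risk (W t) G -> frob dims G 1 >= eps.
Proof.
  intros Hrad.
  destruct (risk_sublevel_grad_lower n d x y L dims l dl u Hn Hxnorm Hy Hu1 Hu2 HL Hd0 HdL
              Hl_deriv Hdl_cont Hdl_neg rad (risk_along 1) Hrad risk_along_1_lt_loss_0)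
    as [eps [Heps Hlow]].
  exists eps; split; [assumption|]. intros t Ht HW G HG. apply (Hlow (W t)); [assumption| |assumption].
  rewrite <- risk_along_nonneg_time by lra. apply risk_along_antitone; lra.
Qed.

Lemma speed2_lower_bound rad : 0 < rad -> exists c, 0 < c /\
  forall t, 1 <= t -> in_ball L dims rad (W t) -> c <= speed2 t.
Proof.
  intros Hrad. destruct (first_layer_grad_lower_bound rad Hrad) as [eps [Heps Hlow]].
  exists (eps ^ 2). split; [now apply pow_lt|]. intros t Ht HW.
  specialize (Hlow t Ht HW _ (Hflow t ltac:(lra))).
  rewrite frob_sqrt_frob2 in Hlow.
  replace (frob2 dims (fun k a b => - V t k a b) 1) with (frob2 dims (V t) 1) in Hlow
    by (apply fsum_ext; intros; apply fsum_ext; intros; ring).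
  pose proof (frob2_first_le_speed2 t).
  enough (eps ^ 2 <= frob2 dims (V t) 1) by lra.
  rewrite <- (sqrt_sqrt (frob2 dims (V t) 1)) by apply frob2_mat_nonneg.
  pose proof (sqrt_pos (frob2 dims (V t) 1)). simpl. nra.
Qed.

Lemma max_frob_unbounded M : exists t, 0 <= t /\ M < max_frob_upto dims (W t) L.
Proof.
  apply NNPP. intros Hbounded.
  set (rad := Rmax M 1). assert (Hrad : 0 < rad) by (pose proof (Rmax_r M 1); unfold rad; lra).
  assert (Hball : forall t, 0 <= t -> in_ball L dims rad (W t)).
  { intros t Ht k Hk. eapply Rle_trans; [now apply frob_le_max_frob_upto|].
    eapply Rle_trans; [|apply Rmax_l]. apply Rnot_lt_le. intros Hlt. apply Hbounded. eauto. }
  destruct (speed2_lower_bound rad Hrad) as [c [Hc Hlow]].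
  set (T := risk_along 1 / c + 1).
  assert (HT : c * T = risk_along 1 + c) by (unfold T; field; lra).
  pose proof (risk_along_nonneg 1). pose proof (risk_along_nonneg (1 + T)).
  assert (0 <= risk_along 1 / c) by (apply Rle_mult_inv_pos; lra).
  pose proof (risk_along_decrease 1 (1 + T) c ltac:(lra) ltac:(unfold T; lra)
    ltac:(intros s Hs; apply Hlow; [lra|apply Hball; lra])).
  replace (1 + T - 1) with T in * by ring. lra.
Qed.


(* Completing the square, [lam V <= |V|^2 + lam^2 / 4], so the coordinate moves at most
   as much as the risk decreases, up to a term linear in time. *)
Lemma coord_increment_le t1 t2 k a b lam : 0 <= t1 -> t1 <= t2 -> valid_index L dims k a b ->
  lam * (W t2 k a b - W t1 k a b) <= risk_along t1 - risk_along t2 + lam ^ 2 * (t2 - t1) / 4.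
Proof.
  intros Ht1 Ht12 Hv.
  assert (lam * flow_ext t2 k a b + risk_along t2 + - (lam ^ 2 / 4) * t2
          <= lam * flow_ext t1 k a b + risk_along t1 + - (lam ^ 2 / 4) * t1) as Hanti.
  { apply (antitone_of_deriv_nonpos
      (fun s => lam * flow_ext s k a b + risk_along s + - (lam ^ 2 / 4) * s)
      (fun s => lam * V s k a b + - speed2 s + - (lam ^ 2 / 4) * 1)); [intros s Hs..|assumption].
    - apply (derivable_pt_lim_plus (fun s => lam * flow_ext s k a b + risk_along s));
        [apply derivable_pt_lim_plus|apply derivable_pt_lim_scal, derivable_pt_lim_id].
      + apply derivable_pt_lim_scal, derivable_pt_lim_flow_ext; [lra|assumption].
      + apply derivable_pt_lim_risk_along; lra.
    - pose proof (speed2_coord_le s k a b Hv). pose proof (pow2_ge_0 (V s k a b - lam / 2)). nra. }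
  rewrite !flow_ext_nonneg in Hanti by lra. lra.
Qed.

Lemma coord_increment_abs_le t1 t2 k a b eta :
  0 <= t1 -> t1 <= t2 -> valid_index L dims k a b -> 0 < eta ->
  Rabs (W t2 k a b - W t1 k a b) <= eta * (risk_along t1 - risk_along t2) + (t2 - t1) / (4 * eta).
Proof.
  intros Ht1 Ht12 Hv Heta.
  assert (Hsign : forall sg, sg ^ 2 = 1 -> sg * (W t2 k a b - W t1 k a b)
                    <= eta * (risk_along t1 - risk_along t2) + (t2 - t1) / (4 * eta)).
  { intros sg Hsg. pose proof (coord_increment_le t1 t2 k a b (sg / eta) Ht1 Ht12 Hv) as Hinc.
    apply (Rmult_le_compat_l eta) in Hinc; [|lra].
    replace (eta * (sg / eta * (W t2 k a b - W t1 k a b))) with (sg * (W t2 k a b - W t1 k a b))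
      in Hinc by (field; lra).
    replace (eta * (risk_along t1 - risk_along t2 + (sg / eta) ^ 2 * (t2 - t1) / 4))
      with (eta * (risk_along t1 - risk_along t2) + sg ^ 2 * (t2 - t1) / (4 * eta))
      in Hinc by (field; lra).
    rewrite Hsg in Hinc. lra. }
  apply Rabs_le. pose proof (Hsign 1 ltac:(ring)). pose proof (Hsign (-1) ltac:(ring)). lra.
Qed.

Lemma coord_uniform_continuity del : 0 < del -> exists h, 0 < h /\
  forall t s k a b, 0 <= t -> 0 <= s -> Rabs (s - t) <= h -> valid_index L dims k a b ->
  Rabs (W s k a b - W t k a b) <= del.
Proof.
  intros Hdel. pose proof (risk_along_nonneg 0).
  set (eta := del / (2 * (risk_along 0 + 1))).
  assert (Heta : 0 < eta) by (unfold eta; apply Rdiv_lt_0_compat; lra).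
  exists (2 * eta * del). split; [nra|].
  assert (Hordered : forall t1 t2 k a b, 0 <= t1 -> t1 <= t2 -> t2 - t1 <= 2 * eta * del ->
            valid_index L dims k a b -> Rabs (W t2 k a b - W t1 k a b) <= del).
  { intros t1 t2 k a b Ht1 Ht12 Hh Hv.
    eapply Rle_trans; [apply (coord_increment_abs_le t1 t2 k a b eta); auto|].
    pose proof (risk_along_antitone 0 t1 ltac:(lra) Ht1). pose proof (risk_along_nonneg t2).
    assert (eta * (risk_along t1 - risk_along t2) <= del / 2).
    { apply Rle_trans with (eta * (risk_along 0 + 1)); [apply Rmult_le_compat_l; lra|].
      unfold eta. right; field; lra. }
    assert ((t2 - t1) / (4 * eta) <= del / 2).
    { unfold Rdiv. apply Rle_trans with (2 * eta * del * / (4 * eta));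
        [apply Rmult_le_compat_r; [left; apply Rinv_0_lt_compat; lra|assumption]|right; field; lra]. }
    lra. }
  intros t s k a b Ht Hs Hts Hv. destruct (Rle_dec t s).
  - apply Hordered; auto. rewrite Rabs_pos_eq in Hts; lra.
  - rewrite Rabs_minus_sym. rewrite Rabs_minus_sym, Rabs_pos_eq in Hts by lra.
    apply Hordered; auto; lra.
Qed.

Lemma in_ball_enlarge rad : 0 < rad -> exists h, 0 < h /\
  forall t s, 0 <= t -> 0 <= s -> Rabs (s - t) <= h ->
  in_ball L dims rad (W t) -> in_ball L dims (2 * rad) (W s).
Proof.
  intros Hrad.
  set (N := fsum L (fun k0 => INR (dims (S k0)) * INR (dims k0)) + 1).
  assert (HN : 1 <= N).
  { enough (0 <= fsum L (fun k0 => INR (dims (S k0)) * INR (dims k0))) by (unfold N; lra).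
    apply fsum_nonneg; intros; apply Rmult_le_pos; apply pos_INR. }
  destruct (coord_uniform_continuity (rad / N) ltac:(apply Rdiv_lt_0_compat; lra)) as [h [Hh Hclose]].
  exists h. split; [assumption|]. intros t s Ht Hs Hts HW k Hk.
  assert (Hlayer : INR (dims k) * INR (dims (k - 1)) <= N).
  { destruct k as [|k0]; [lia|]. rewrite Nat.sub_1_r. simpl Nat.pred. unfold N.
    enough (INR (dims (S k0)) * INR (dims k0) <= fsum L (fun k0 => INR (dims (S k0)) * INR (dims k0)))
      by lra.
    apply (fsum_term_le L (fun k0 => INR (dims (S k0)) * INR (dims k0))); [|lia].
    intros; apply Rmult_le_pos; apply pos_INR. }
  rewrite frob_sqrt_frob2, <- (sqrt_pow2 (2 * rad)) by lra. apply sqrt_le_1_alt.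
  apply (frob2_le_of_coord_close dims (W t) (W s) k rad (rad / N)); [now apply frob2_le_of_frob_le, HW| |].
  - apply Rle_trans with (N * (rad / N) ^ 2); [apply Rmult_le_compat_r; [apply pow2_ge_0|assumption]|].
    replace (N * (rad / N) ^ 2) with (rad ^ 2 / N) by (field; lra).
    apply Rle_trans with (rad ^ 2 / 1); [|lra].
    apply Rmult_le_compat_l; [apply pow2_ge_0|apply Rinv_le_contravar; lra].
  - intros a b Ha Hb. apply Hclose; auto. repeat split; auto; lia.
Qed.

Lemma finite_measure_in_ball rad : 0 < rad ->
  finite_lebesgue_measure (fun t => 0 <= t /\ in_ball L dims rad (W t)).
Proof.
  intros Hrad.
  destruct (in_ball_enlarge rad Hrad) as [h [Hh Henlarge]].
  destruct (speed2_lower_bound (2 * rad) ltac:(lra)) as [c [Hc Hlow]].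
  apply (finite_lebesgue_measure_of_cells _ (fun m => risk_along (1 + INR m * h)) 1 h c);
    [lra|assumption|assumption|now intros t []|intros; apply risk_along_nonneg| |].
  - intros m. pose proof (pos_INR m). apply risk_along_antitone; [nra|rewrite S_INR; nra].
  - intros m [t [[Ht HW] Htm]]. pose proof (pos_INR m). rewrite S_INR in *.
    replace (c * h) with (c * (1 + (INR m + 1) * h - (1 + INR m * h))) by ring.
    apply risk_along_decrease; [nra|nra|]. intros s Hs.
    apply Hlow; [nra|]. apply (Henlarge t s Ht); [nra|apply Rabs_le; nra|assumption].
Qed.


End Flow.

Theorem mainTheorem2
  (* data *)
  (n d : nat) (x : nat -> nat -> R) (y : nat -> R)
  (Hn : (0 < n)%nat)
  (Hxnorm : forall i, (i < n)%nat -> fsum d (fun j => (x i j) ^ 2) <= 1)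
  (Hy : forall i, (i < n)%nat -> y i = 1 \/ y i = -1)
  (Hsep : exists u : nat -> R, fsum d (fun j => (u j) ^ 2) = 1 /\
            forall i, (i < n)%nat -> fsum d (fun j => u j * zdat x y i j) > 0)
  (* architecture *)
  (L : nat) (dims : nat -> nat)
  (HL : (1 <= L)%nat) (Hd0 : dims 0%nat = d) (HdL : dims L = 1%nat)
  (* Assumption 1 on the loss; dl is its derivative *)
  (l dl : R -> R)
  (Hl_deriv : forall s, derivable_pt_lim l s (dl s))
  (Hdl_cont : continuity dl)
  (Hdl_neg : forall s, dl s < 0)
  (Hl_minf : forall M, exists N, forall s, s < N -> M < l s)
  (Hl_pinf : forall eps, 0 < eps -> exists N, forall s, N < s -> Rabs (l s) < eps)
  (* gradient flow: W is C^1 on [0,oo) with velocity V = - grad R(W) *)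
  (W : R -> params) (V : R -> params)
  (HWderiv : forall t, 0 <= t -> forall k a b, valid_index L dims k a b ->
      deriv_nonneg (fun s => W s k a b) t (V t k a b))
  (HVcont : forall t, 0 <= t -> forall k a b, valid_index L dims k a b ->
      cont_nonneg (fun s => V s k a b) t)
  (Hflow : forall t, 0 <= t ->
      is_gradient L dims (risk l n d L dims x y) (W t) (fun k a b => - V t k a b))
  (* Assumption 2 *)
  (Hinit_grad : forall G, is_gradient L dims (risk l n d L dims x y) (W 0) G ->
      exists k a b, valid_index L dims k a b /\ G k a b <> 0)
  (Hinit_risk : risk l n d L dims x y (W 0) <= l 0) :
  (forall Rad, 0 < Rad -> exists eps, 0 < eps /\
     forall t, 1 <= t -> in_ball L dims Rad (W t) ->
       forall G, is_gradient L dims (risk l n d L dims x y) (W t) G ->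
         frob dims G 1 >= eps)
  /\ (forall Rad, 0 < Rad ->
        finite_lebesgue_measure (fun t => 0 <= t /\ in_ball L dims Rad (W t)))
  /\ (forall M, exists t, 0 <= t /\ M < max_frob_upto dims (W t) L).
Proof.
  destruct Hsep as [u [Hu1 Hu2]].
  split; [|split].
  - intros Rad HRad.
    eapply first_layer_grad_lower_bound with (n := n) (x := x) (y := y) (u := u) (V := V);
      eassumption.
  - intros Rad HRad.
    eapply finite_measure_in_ball with (n := n) (x := x) (y := y) (u := u) (V := V);
      eassumption.
  - intros M.
    eapply max_frob_unbounded with (n := n) (x := x) (y := y) (u := u) (V := V);
      eassumption.
Qed.
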